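(* Let $H$ be a monoid and let $X\subseteq\mathrm{Gpr}\,H$. Assume that $X$ has a least common multiple $l$ in $H$. Then $l\in\mathrm{Gpr}\,H$.
   Context: A monoid means a commutative cancellative monoid (written multiplicatively). An element $r\in H$ is a radical generator if the principal ideal $rH$ is radical, i.e. for all $b\in H$ and $n\in\mathbb{N}$, $r\mid b^n$ implies $r\mid b$; $\mathrm{Gpr}\,H$ is the set of radical generators of $H$. A least common multiple of $X$ is an element $l\in H$ such that $x\mid l$ for all $x\in X$, and $l\mid h$ for every $h\in H$ divisible by all elements of $X$. *)

From Stdlib Require Import Arith.

Record ccmonoid := CCMonoid {
  carrier :> Type;
  mmul : carrier -> carrier -> carrier;
  mone : carrier;
  mmulA : forall a b c, mmul a (mmul b c) = mmul (mmul a b) c;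
  mmulC : forall a b, mmul a b = mmul b a;
  mmul1 : forall a, mmul mone a = a;
  mmul_cancel : forall a b c, mmul a b = mmul a c -> b = c
}.

Definition mdvd {H : ccmonoid} (a b : H) : Prop := exists c : H, b = mmul H a c.

Fixpoint mpow {H : ccmonoid} (b : H) (n : nat) : H :=
  match n with
  | O => mone H
  | S k => mmul H b (mpow b k)
  end.

(* r is a radical generator: rH is a radical ideal *)
Definition radical_generator {H : ccmonoid} (r : H) : Prop :=
  forall (b : H) (n : nat), mdvd r (mpow b n) -> mdvd r b.

Definition Gpr (H : ccmonoid) : H -> Prop := fun r => radical_generator r.

Definition is_lcm {H : ccmonoid} (X : H -> Prop) (l : H) : Prop :=
  (forall x, X x -> mdvd x l) /\
  (forall h : H, (forall x, X x -> mdvd x h) -> mdvd l h).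


Lemma mdvd_trans (H : ccmonoid) (a b c : H) : mdvd a b -> mdvd b c -> mdvd a c.
Proof.
  intros [d ->] [e ->]. exists (mmul H d e). symmetry. apply mmulA.
Qed.

Theorem lemma2p6 (H : ccmonoid) (X : H -> Prop) (l : H) :
  (forall x, X x -> Gpr H x) -> is_lcm X l -> Gpr H l.
Proof.
  intros X_radical [X_dvd_l l_least] b n l_dvd_pow.
  apply l_least. intros x Xx.
  apply (X_radical x Xx b n).
  exact (mdvd_trans H x l (mpow b n) (X_dvd_l x Xx) l_dvd_pow).
Qed.
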